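(* Let $M$ be a matroid on $S$ and $N$ a matroid on $T$, with $S\cap T=\emptyset$, let $P=M\mathbin{\Box} N$, and let $U\subseteq S\cup T$. Then $$P|U = M|(U\cap S)\ \mathbin{\Box}\ \mathrm{L}^i\big(N|(U\cap T)\big)\qquad\text{and}\qquad P/U=\mathrm{T}^j\big(M/(U\cap S)\big)\ \mathbin{\Box}\ N/(U\cap T),$$ where $i=\lambda_M(U\cap S)$ and $j=\nu_N(U\cap T)$.
   Context: For a matroid $M$ on $S$ write $\rho_M$ for rank, $\rho(M)=\rho_M(S)$, $\nu_M(A)=|A|-\rho_M(A)$, $\lambda_M(A)=\rho(M)-\rho_M(A)$. For matroids $M$ on $S$ and $N$ on $T$ with $S\cap T=\emptyset$, the free product $M\mathbin{\Box} N$ is the matroid on $S\cup T$ whose independent sets are those $A$ with $A\cap S$ independent in $M$ and $\lambda_M(A\cap S)\geq\nu_N(A\cap T)$. The truncation $\mathrm{T}M$ of $M$ is the matroid whose independent sets are the independent sets $A$ of $M$ with $|A|\leq\max\{0,\rho(M)-1\}$; the (Higgs) lift $\mathrm{L}M$ is the matroid whose independent sets are the $A\subseteq S$ with $\nu_M(A)\leq 1$. $\mathrm{T}^i$ and $\mathrm{L}^i$ denote $i$-fold iterates ($\mathrm{T}^0=\mathrm{L}^0=$ identity). $|$ denotes restriction and $/$ contraction. *)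

From mathcomp Require Import all_boot.
Set Implicit Arguments. Unset Strict Implicit. Unset Printing Implicit Defensive.

Record matroid (E : finType) := Matroid {
  ground : {set E};
  indep : {set {set E}} }.

Section Matroids.
Variable E : finType.
Implicit Types (M N : matroid E) (A B X : {set E}).

Definition is_matroid M : Prop :=
  [/\ set0 \in indep M,
      (forall A, A \in indep M -> A \subset ground M),
      (forall A B, B \in indep M -> A \subset B -> A \in indep M) &
      (forall A B, A \in indep M -> B \in indep M -> #|A| < #|B| ->
         exists2 x, x \in B :\: A & x |: A \in indep M)].

Definition rank M A : nat := \max_(B in indep M | B \subset A) #|B|.
Definition rk M : nat := rank M (ground M).
Definition nullity M A : nat := #|A| - rank M A.
Definition lam M A : nat := rk M - rank M A.

Definition free_product M N : matroid E :=
  Matroid (ground M :|: ground N)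
    [set A : {set E} | [&& A \subset ground M :|: ground N,
                 (A :&: ground M) \in indep M &
                 nullity N (A :&: ground N) <= lam M (A :&: ground M)]].

Definition truncation M : matroid E :=
  Matroid (ground M) [set A : {set E} in indep M | #|A| <= (rk M).-1].

Definition higgs_lift M : matroid E :=
  Matroid (ground M) [set A : {set E} | (A \subset ground M) && (nullity M A <= 1)].

Definition restrict M X : matroid E :=
  Matroid X [set A : {set E} in indep M | A \subset X].

Definition contract M X : matroid E :=
  Matroid (ground M :\: X)
    [set A : {set E} | (A \subset ground M :\: X) && (rank M (A :|: X) == #|A| + rank M X)].

End Matroids.

(* The rank of a free product is
     rho_P(X) = rho_M(X_S) + rho_N(X_T) + min(nu_N(X_T), lambda_M(X_S)):
   an independent set of P is an M-independent part together with an N-part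
   whose nullity is paid for by the slack lambda_M left on the M side.
   Restricting P to U keeps the M-independent part and shrinks that slack by
   i = lambda_M(U_S), which is exactly compensated by lowering every N-nullity
   by i, i.e. by i Higgs lifts.  Contracting U consumes j = nu_N(U_T) units of
   the slack of M/U_S, which is what j truncations do; both sides then have
   the same independent sets by the rank formula. *)
From mathcomp Require Import all_boot zify.

Set Implicit Arguments. Unset Strict Implicit. Unset Printing Implicit Defensive.

Section Rank.
Variable E : finType.
Implicit Types (M N : matroid E) (A B C X Y : {set E}).

Definition hereditary M := forall A B, B \in indep M -> A \subset B -> A \in indep M.

Lemma matroid_set0 M : is_matroid M -> set0 \in indep M.
Proof. by case. Qed.

Lemma matroid_hereditary M : is_matroid M -> hereditary M.
Proof. by case. Qed.

Lemma rank_basis M A : set0 \in indep M ->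
  exists B, [/\ B \in indep M, B \subset A & #|B| = rank M A].
Proof.
move=> M0; rewrite /rank (bigmax_eq_arg set0) ?M0 ?sub0set //.
by case: arg_maxnP => [|B /andP[BM BA] _]; [rewrite M0 sub0set | exists B].
Qed.

Lemma leq_card_rank M A B : B \in indep M -> B \subset A -> #|B| <= rank M A.
Proof. by move=> BM BA; apply: (bigmax_sup B) => //; rewrite BM BA. Qed.

Lemma rank_leq_bound M A m :
  (forall B, B \in indep M -> B \subset A -> #|B| <= m) -> rank M A <= m.
Proof. by move=> bound; apply/bigmax_leqP => B /andP[]; apply: bound. Qed.

Lemma rank_leq_card M A : rank M A <= #|A|.
Proof. by apply: rank_leq_bound => B _; apply: subset_leq_card. Qed.

Lemma rank_mono M A B : A \subset B -> rank M A <= rank M B.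
Proof.
move=> AB; apply: rank_leq_bound => C CM CA.
by apply: leq_card_rank CM (subset_trans CA AB).
Qed.

Lemma rank_indep M A : A \in indep M -> rank M A = #|A|.
Proof. by move=> AM; apply/eqP; rewrite eqn_leq rank_leq_card leq_card_rank. Qed.

Lemma indep_rankE M A : set0 \in indep M -> (A \in indep M) = (rank M A == #|A|).
Proof.
move=> M0; apply/idP/eqP => [|rA]; first exact: rank_indep.
have [B [BM BA cB]] := rank_basis A M0.
suff AB : A = B by rewrite AB.
by apply/eqP; rewrite eq_sym eqEcard BA cB rA leqnn.
Qed.

Lemma rank_setU_leq M X Y : hereditary M -> rank M (X :|: Y) <= rank M X + #|Y|.
Proof.
move=> Mh; apply: rank_leq_bound => C CM CXY.
have CDX : C :\: Y \subset X by rewrite subDset setUC.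
rewrite -(cardsID Y C) addnC leq_add ?subset_leq_card ?subsetIr //.
exact: leq_card_rank (Mh _ _ CM (subsetDl C Y)) CDX.
Qed.

Lemma rank_restrict M X A : A \subset X -> rank (restrict M X) A = rank M A.
Proof.
move=> AX; apply: eq_bigl => B; rewrite inE.
by case BA: (B \subset A); rewrite ?andbF // (subset_trans BA AX) !andbT.
Qed.

Lemma exists_subset_card A k : k <= #|A| -> exists2 B : {set E}, B \subset A & #|B| = k.
Proof.
elim: k => [|k IH] kA; first by exists set0; rewrite ?sub0set ?cards0.
have [B BA cB] := IH (ltnW kA).
have : 0 < #|A :\: B| by rewrite cardsDS // cB subn_gt0.
rewrite card_gt0 => /set0Pn[x]; rewrite inE => /andP[xB xA].
by exists (x |: B); rewrite ?subUset ?sub1set ?xA // cardsU1 xB cB.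
Qed.

Lemma cardsU_disjoint A B : [disjoint A & B] -> #|A :|: B| = #|A| + #|B|.
Proof. by move=> dAB; apply/eqP; rewrite (leq_card_setU A B).2. Qed.

Lemma card_split_disjoint S T A : A \subset S :|: T -> [disjoint S & T] ->
  #|A| = #|A :&: S| + #|A :&: T|.
Proof.
move=> AST dST; rewrite -cardsU_disjoint -?setIUr ?(setIidPl AST) //.
exact: disjointW (subsetIr _ _) (subsetIr _ _) dST.
Qed.

End Rank.

Section LiftTruncation.
Variable E : finType.
Implicit Types (M : matroid E) (A B C : {set E}).

Lemma higgs_lift_set0 M : set0 \in indep (higgs_lift M).
Proof. by rewrite inE sub0set /nullity cards0. Qed.

Lemma rank_higgs_lift M A : set0 \in indep M -> A \subset ground M ->
  rank (higgs_lift M) A = minn #|A| (rank M A).+1.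
Proof.
move=> M0 AM; apply/eqP; rewrite eqn_leq; apply/andP; split.
  apply: rank_leq_bound => B; rewrite inE /nullity => /andP[_ nB] BA.
  by have := rank_mono M BA; have := subset_leq_card BA; lia.
have [rA|cA] := ltnP (rank M A) #|A|; last first.
  apply: leq_trans (geq_minl _ _) (leq_card_rank _ _) => //.
  by rewrite inE AM /nullity (eqP cA).
have [B [BM BA cB]] := rank_basis A M0.
have : 0 < #|A :\: B| by rewrite cardsDS // cB subn_gt0.
rewrite card_gt0 => /set0Pn[x]; rewrite inE => /andP[xB xA].
have xBA : x |: B \subset A by rewrite subUset sub1set xA.
apply: leq_trans (geq_minr _ _) (leq_trans _ (leq_card_rank _ xBA)).
  by rewrite cardsU1 xB cB.
rewrite inE (subset_trans xBA AM) /nullity cardsU1 xB.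
by have := leq_card_rank BM (subsetUr [set x] B); lia.
Qed.

Lemma nullity_higgs_lift M A : set0 \in indep M -> A \subset ground M ->
  nullity (higgs_lift M) A = nullity M A - 1.
Proof.
move=> M0 AM; rewrite /nullity rank_higgs_lift //.
by have := rank_leq_card M A; lia.
Qed.

Lemma ground_iter_higgs_lift M i : ground (iter i (@higgs_lift E) M) = ground M.
Proof. by elim: i. Qed.

Lemma nullity_iter_higgs_lift M i A : set0 \in indep M -> A \subset ground M ->
  nullity (iter i (@higgs_lift E) M) A = nullity M A - i.
Proof.
move=> M0 AM; elim: i => [|i IH]; first by rewrite subn0.
have liftM0 : set0 \in indep (iter i (@higgs_lift E) M).
  by case: i {IH} => [|i] //; apply: higgs_lift_set0.
by rewrite /= nullity_higgs_lift ?ground_iter_higgs_lift // IH subn1 subnS.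
Qed.

Lemma rank_truncation M A : set0 \in indep M -> hereditary M ->
  rank (truncation M) A = minn (rank M A) (rk M).-1.
Proof.
move=> M0 Mh; apply/eqP; rewrite eqn_leq; apply/andP; split.
  apply: rank_leq_bound => B; rewrite inE => /andP[BM cB] BA.
  by rewrite leq_min leq_card_rank.
have [B [BM BA cB]] := rank_basis A M0.
have [|C CB cC] := @exists_subset_card _ B (minn (rank M A) (rk M).-1).
  by rewrite cB geq_minl.
rewrite -cC; apply: leq_card_rank (subset_trans CB BA).
by rewrite inE (Mh _ _ BM CB) cC geq_minr.
Qed.

Lemma truncation_set0 M : set0 \in indep M -> set0 \in indep (truncation M).
Proof. by move=> M0; rewrite inE M0 cards0. Qed.

Lemma hereditary_truncation M : hereditary M -> hereditary (truncation M).
Proof.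
move=> Mh A B; rewrite !inE => /andP[BM cB] AB.
by rewrite (Mh _ _ BM AB) (leq_trans (subset_leq_card AB) cB).
Qed.

Lemma ground_iter_truncation M j : ground (iter j (@truncation E) M) = ground M.
Proof. by elim: j. Qed.

Lemma iter_truncation_set0 M j :
  set0 \in indep M -> set0 \in indep (iter j (@truncation E) M).
Proof. by move=> M0; elim: j => //= j; apply: truncation_set0. Qed.

Lemma hereditary_iter_truncation M j :
  hereditary M -> hereditary (iter j (@truncation E) M).
Proof. by move=> Mh; elim: j => //= j; apply: hereditary_truncation. Qed.

Lemma rank_iter_truncation M j A : set0 \in indep M -> hereditary M ->
  A \subset ground M ->
  rank (iter j (@truncation E) M) A = minn (rank M A) (rk M - j).
Proof.
move=> M0 Mh; elim: j A => [|j IH] A AM.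
  by rewrite subn0; apply/esym/minn_idPl/rank_mono.
have jM0 := iter_truncation_set0 j M0.
have jMh : hereditary (iter j (@truncation E) M) by apply: hereditary_iter_truncation.
rewrite /= rank_truncation //.
rewrite /rk ground_iter_truncation !IH //.
by have := rank_mono M AM; rewrite /rk; lia.
Qed.

Lemma rk_iter_truncation M j : set0 \in indep M -> hereditary M ->
  rk (iter j (@truncation E) M) = rk M - j.
Proof.
move=> M0 Mh; rewrite {1}/rk ground_iter_truncation rank_iter_truncation //.
exact/minn_idPr/leq_subr.
Qed.

End LiftTruncation.

Section Contraction.
Variable E : finType.
Implicit Types (M : matroid E) (A B I K X : {set E}).

Lemma indep_augment M I K : is_matroid M -> I \in indep M -> K \in indep M ->
  #|I| <= #|K| ->
  exists J, [/\ J \in indep M, I \subset J, J \subset I :|: K & #|J| = #|K|].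
Proof.
case=> _ _ _ exchange; move gap: (#|K| - #|I|) => n.
elim: n I gap => [|n IH] I gap IM KM IK.
  by exists I; rewrite subsetUl; split=> //; apply/eqP; rewrite eqn_leq IK -subn_eq0 gap.
have [|x /setDP[xK xI] xIM] := exchange I K IM KM; first by rewrite -subn_gt0 gap.
have [||J [JM xIJ JxIK cJ]] := IH (x |: I) _ xIM KM; rewrite ?cardsU1 ?xI; [lia | lia |].
exists J; split=> //; first exact: subset_trans (subsetUr _ _) xIJ.
apply: subset_trans JxIK _.
by rewrite subUset subsetUr andbT subUset sub1set inE xK orbT subsetUl.
Qed.

Lemma rank_contract M X A : is_matroid M -> A \subset ground M :\: X ->
  rank (contract M X) A = rank M (A :|: X) - rank M X.
Proof.
move=> Mm AMX; have M0 := matroid_set0 Mm; have Mh := matroid_hereditary Mm.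
apply/eqP; rewrite eqn_leq; apply/andP; split.
  apply: rank_leq_bound => B; rewrite inE => /andP[_ /eqP rBX] BA.
  by have := rank_mono M (setSU X BA); lia.
(* Extend a basis of X to a basis J of A :|: X; then J :\: X is independent
   in M / X and has at least rank M (A :|: X) - rank M X elements. *)
have [I [IM IX cI]] := rank_basis X M0.
have [K [KM KAX cK]] := rank_basis (A :|: X) M0.
have [|J [JM IJ JIK cJ]] := indep_augment Mm IM KM.
  by rewrite cI cK rank_mono ?subsetUr.
have JDA : J :\: X \subset A.
  rewrite subDset setUC; apply: subset_trans JIK _.
  by rewrite subUset KAX (subset_trans IX) ?subsetUr.
have cJX : #|I| <= #|J :&: X| by rewrite subset_leq_card // subsetI IJ.
have rJX : #|J :&: X| <= rank M X.
  by rewrite leq_card_rank ?subsetIr ?(Mh _ _ JM (subsetIl J X)).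
have rJDX : rank M (J :\: X :|: X) <= rank M X + #|J :\: X|.
  by rewrite setUC rank_setU_leq.
have rJ : #|J| <= rank M (J :\: X :|: X).
  by rewrite leq_card_rank // setUC -subDset.
have cJ' := cardsID X J.
apply: (@leq_trans #|J :\: X|); first lia.
apply: (leq_card_rank _ JDA); rewrite inE (subset_trans JDA AMX) /=.
apply/eqP; lia.
Qed.

Lemma rk_contract M X : is_matroid M -> X \subset ground M ->
  rk (contract M X) = rk M - rank M X.
Proof.
move=> Mm XM; rewrite /rk rank_contract //.
by rewrite -{2}(setIidPr XM) setUC setID.
Qed.

Lemma contract_set0 M X : set0 \in indep (contract M X).
Proof. by rewrite inE sub0set set0U cards0 add0n eqxx. Qed.

Lemma hereditary_contract M X : is_matroid M -> hereditary (contract M X).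
Proof.
move=> /matroid_hereditary Mh A B; rewrite !inE => /andP[BMX /eqP rBX] AB.
rewrite (subset_trans AB BMX); apply/eqP.
have rBA : rank M (B :|: X) <= rank M (A :|: X) + #|B :\: A|.
  by rewrite -{1}(setID B A) (setIidPr AB) setUAC rank_setU_leq.
have rAX : rank M (A :|: X) <= rank M X + #|A| by rewrite setUC rank_setU_leq.
by have := cardsDS AB; have := subset_leq_card AB; lia.
Qed.

End Contraction.

Section FreeProduct.
Variable E : finType.
Implicit Types (M N : matroid E) (A B C X : {set E}).

Lemma free_product_indep_setU M N A B :
  [disjoint ground M & ground N] -> A \in indep M -> A \subset ground M ->
  B \subset ground N -> nullity N B <= lam M A ->
  A :|: B \in indep (free_product M N).
Proof.
move=> dMN AM AS BT nB; have BS0 : B :&: ground M = set0.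
  by apply/eqP; rewrite setI_eq0 (disjointWl BT) // disjoint_sym.
have AT0 : A :&: ground N = set0 by apply/eqP; rewrite setI_eq0 (disjointWl AS).
rewrite inE setUSS //= !setIUl (setIidPl AS) (setIidPl BT) BS0 AT0 setU0 set0U.
by rewrite AM.
Qed.

Lemma rank_free_product_leq M N X : [disjoint ground M & ground N] ->
  rank (free_product M N) X <= rank M (X :&: ground M) + rank N (X :&: ground N)
     + minn (nullity N (X :&: ground N)) (lam M (X :&: ground M)).
Proof.
move=> dMN; apply: rank_leq_bound => B; rewrite inE => /and3P[BMN BM nB] BX.
rewrite (card_split_disjoint BMN dMN).
have rBS := leq_card_rank BM (setSI (ground M) BX).
have rBT := rank_mono N (setSI (ground N) BX).
have cBT := subset_leq_card (setSI (ground N) BX).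
move: nB; rewrite /nullity /lam (rank_indep BM) /rk => nB.
by have := rank_mono M (subsetIr X (ground M)); lia.
Qed.

Lemma rank_free_product_geq M N X : [disjoint ground M & ground N] ->
  set0 \in indep M -> set0 \in indep N ->
  rank M (X :&: ground M) + rank N (X :&: ground N)
     + minn (nullity N (X :&: ground N)) (lam M (X :&: ground M))
  <= rank (free_product M N) X.
Proof.
move=> dMN M0 N0.
have [BS [BSM BSX cBS]] := rank_basis (X :&: ground M) M0.
have [BT [BTN BTX cBT]] := rank_basis (X :&: ground N) N0.
set k := minn _ _.
have [|C /subsetDP[CXT CBT] cC] := @exists_subset_card _ ((X :&: ground N) :\: BT) k.
  by rewrite cardsDS // cBT geq_minl.
have [CX CT] : C \subset X /\ C \subset ground N by apply/andP; rewrite -subsetI.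
have [BSX' BSS] : BS \subset X /\ BS \subset ground M by apply/andP; rewrite -subsetI.
have [BTX' BTT] : BT \subset X /\ BT \subset ground N by apply/andP; rewrite -subsetI.
have cBTC : #|BT :|: C| = #|BT| + #|C| by rewrite cardsU_disjoint // disjoint_sym.
have cBSBT : #|BS :|: (BT :|: C)| = #|BS| + #|BT :|: C|.
  by rewrite cardsU_disjoint // (disjointW BSS _ dMN) // subUset BTT.
apply: (@leq_trans #|BS :|: (BT :|: C)|); first by rewrite cBSBT cBTC cBS cBT cC addnA.
apply: leq_card_rank; last by rewrite !subUset BSX' BTX' CX.
apply: free_product_indep_setU => //; first by rewrite subUset BTT.
have kS : k <= lam M (X :&: ground M) := geq_minr _ _.
have rBTC := leq_card_rank BTN (subsetUl BT C).
rewrite /nullity /lam (rank_indep BSM) cBS cBTC cC; apply: leq_trans kS.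
by rewrite leq_subLR leq_add2r.
Qed.

Lemma rank_free_product M N X : [disjoint ground M & ground N] ->
  set0 \in indep M -> set0 \in indep N ->
  rank (free_product M N) X = rank M (X :&: ground M) + rank N (X :&: ground N)
     + minn (nullity N (X :&: ground N)) (lam M (X :&: ground M)).
Proof.
by move=> dMN M0 N0; apply/eqP; rewrite eqn_leq rank_free_product_leq ?rank_free_product_geq.
Qed.

End FreeProduct.

Section Minors.
Variable E : finType.
Implicit Types (M N : matroid E) (A U : {set E}).

Lemma matroid_eq (M1 M2 : matroid E) :
  ground M1 = ground M2 -> indep M1 =i indep M2 -> M1 = M2.
Proof. by case: M1 M2 => g1 i1 [g2 i2] /= -> /setP ->. Qed.

Lemma restrict_free_product M N U :
  set0 \in indep N -> U \subset ground M :|: ground N ->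
  restrict (free_product M N) U =
    free_product (restrict M (U :&: ground M))
      (iter (lam M (U :&: ground M)) (@higgs_lift E) (restrict N (U :&: ground N))).
Proof.
move=> N0 UMN; have NU0 : set0 \in indep (restrict N (U :&: ground N)).
  by rewrite inE N0 sub0set.
apply: matroid_eq => [|A]; rewrite /= ground_iter_higgs_lift /= -setIUr.
  exact/esym/setIidPl.
rewrite !inE subsetI; have [AU|] := boolP (A \subset U); last by rewrite !andbF.
rewrite !setIA (setIidPl AU) (setSI _ AU) nullity_iter_higgs_lift ?setSI // !andbT /=.
rewrite /nullity /lam /rk !rank_restrict ?setSI //=; congr [&& _, _ & _].
have := rank_mono M (setSI (ground M) AU); have := rank_mono M (subsetIr U (ground M)).
by move=> rU rA; apply/idP/idP; lia.
Qed.

Lemma setDIidr A B : A :\: (B :&: A) = A :\: B.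
Proof. by rewrite setDIr setDv setU0. Qed.

Lemma setID_disjoint A U V : [disjoint A & U] -> A :&: (V :\: U) = A :&: V.
Proof. by move=> AU; rewrite setIDA; apply/setDidPl/(disjointWl (subsetIl A V)). Qed.

Lemma contract_free_product M N U :
  is_matroid M -> is_matroid N -> [disjoint ground M & ground N] ->
  contract (free_product M N) U =
    free_product (iter (nullity N (U :&: ground N)) (@truncation E)
                       (contract M (U :&: ground M)))
                 (contract N (U :&: ground N)).
Proof.
move=> Mm Nm dMN; have [M0 N0] := (matroid_set0 Mm, matroid_set0 Nm).
have MU0 := contract_set0 M (U :&: ground M).
have MUh : hereditary (contract M (U :&: ground M)) by apply: hereditary_contract.
apply: matroid_eq => [|A]; rewrite /= ground_iter_truncation /= !setDIidr -?setDUl //.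
rewrite !inE; have [AMNU|] := boolP (A \subset _); last by [].
have [AMN AU] : A \subset ground M :|: ground N /\ [disjoint A & U].
  by apply/andP; rewrite -subsetD.
rewrite !setID_disjoint //=.
have AMU : A :&: ground M \subset ground M :\: (U :&: ground M).
  by rewrite setDIidr -(setID_disjoint _ AU) subsetIr.
have ANU : A :&: ground N \subset ground N :\: (U :&: ground N).
  by rewrite setDIidr -(setID_disjoint _ AU) subsetIr.
have cAUN : #|A :&: ground N :|: U :&: ground N| = #|A :&: ground N| + #|U :&: ground N|.
  by rewrite cardsU_disjoint // (disjointW (subsetIl _ _) (subsetIl _ _) AU).
rewrite !rank_free_product // !setIUl (indep_rankE _ (iter_truncation_set0 _ MU0)).
rewrite /lam !rk_iter_truncation // !rank_iter_truncation //.
rewrite rk_contract ?subsetIr // !rank_contract // /nullity rank_contract //.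
rewrite cAUN (card_split_disjoint AMN dMN).
set AS := A :&: ground M; set AT := A :&: ground N.
set US := U :&: ground M; set UT := U :&: ground N.
have rMU : rank M US <= rank M (AS :|: US) by apply/rank_mono/subsetUr.
have rMAU : rank M (AS :|: US) <= rk M by apply: rank_mono; rewrite subUset !subsetIr.
have rMAU' : rank M (AS :|: US) <= rank M US + #|AS|.
  by rewrite setUC; apply/rank_setU_leq/matroid_hereditary.
have rNU : rank N UT <= #|UT| := rank_leq_card N UT.
have rNAU : rank N UT <= rank N (AT :|: UT) by apply/rank_mono/subsetUr.
have rNAU' : rank N (AT :|: UT) <= rank N UT + #|AT|.
  by rewrite setUC; apply/rank_setU_leq/matroid_hereditary.
move: rMU rMAU rMAU' rNU rNAU rNAU'.
move: (rk M) (rank M (AS :|: US)) (rank M US) (rank N (AT :|: UT)) (rank N UT).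
move: #|AS| #|AT| #|UT| => cAM cAN cUN rM rMA rMU rNA rNU *.
by apply/idP/idP; lia.
Qed.

End Minors.

Theorem proposition5p2 (E : finType) (M N : matroid E) (U : {set E}) :
  is_matroid M -> is_matroid N ->
  [disjoint ground M & ground N] ->
  U \subset ground M :|: ground N ->
  let P := free_product M N in
  let i := lam M (U :&: ground M) in
  let j := nullity N (U :&: ground N) in
  restrict P U =
    free_product (restrict M (U :&: ground M))
                 (iter i (@higgs_lift E) (restrict N (U :&: ground N)))
  /\
  contract P U =
    free_product (iter j (@truncation E) (contract M (U :&: ground M)))
                 (contract N (U :&: ground N)).
Proof.
move=> Mm Nm dMN UMN P i j; split.
  exact: restrict_free_product (matroid_set0 Nm) UMN.
exact: contract_free_product.
Qed.
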